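(* Let $g\in\mathbb{Z}^+$, $\ell\in\mathbb{Z}_{\ge0}$, $\vec i\le\vec j$ in $\mathbb{Z}^d$ and $k\in\{1,\dots,\lfloor\ell/g\rfloor\}$. Then (i) $\mathcal{O}^k\big(\mathcal{B}^\ell[\vec i:\vec j],-g,\mathfrak{B}\big)=\mathcal{B}^{\ell-gk}\big[L^k(\vec i):R^k(\vec j)\big]$, where $L(\vec i)=D_0^g(\vec i)-p$ and $R(\vec i)=D_0^g(\vec i+p)$; (ii) for every $\varphi\in\mathfrak{B}$ with $\ell_\varphi=\ell$, $\mathcal{O}^k(\varphi,-g,\mathfrak{B})\subset\{\psi\in\mathfrak{B}:\ell_\psi=\ell-gk,\ \|\rho(\varphi,\psi)\|_\infty\le C\}$ with $C=p\,n^g\frac{1-n^{-kg}}{n^g-1}+1\le\frac{pn^g}{n^g-1}+1$; (iii) $\#\mathcal{O}^k(\varphi,-g,\mathfrak{B})\le(2C+1)^d$.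
   Context: Fix integers $d\ge1$, $n\ge2$, $m\ge2$; $s=n-1$, $p=m-1$. Vector inequalities/floors componentwise; $[\vec i:\vec j]=\{\vec k\in\mathbb{Z}^d:\vec i\le\vec k\le\vec j\}$. $D_c(\vec i)=\lfloor(\vec i-c)/n\rfloor$ and $D_c^k$ its $k$-fold iterate. B-splines: $Q$ is the uniform B-spline of order $m$ with knots $0,\dots,m$, $\varphi^\ell_{\vec i}(\vec x)=\prod_kQ(n^\ell x_k-i_k)$ ($\ell\ge0$, $\vec i\in\mathbb{Z}^d$), $\mathfrak{B}$ the set of all of them, $\ell_\varphi,\vec i_\varphi$ level and index, $\mathcal{B}^\ell[\vec i:\vec j]=\{\varphi^\ell_{\vec k}:\vec k\in[\vec i:\vec j]\}$. Cells: $I^\ell_{\vec i}=\prod_k[i_kn^{-\ell},(i_k+1)n^{-\ell})$, $\mathcal{I}^\ell[\vec i:\vec j]$ the corresponding box of cells; cell children $\mathrm{ch}(I^\ell_{\vec i})=\mathcal{I}^{\ell+1}[n\vec i:n\vec i+s]$, $\mathrm{ch}^k$ the $k$-fold application, $\mathrm{ch}^{-k}(I)=\{J:I\in\mathrm{ch}^k(J)\}$ (unions over sets). Cell support $\mathbb{I}(\varphi^\ell_{\vec i})=\mathcal{I}^\ell[\vec i:\vec i+p]$, $\mathbb{I}^k(\varphi)=\mathrm{ch}^k(\mathbb{I}(\varphi))$ for $k\in\mathbb{Z}$; $\mathbb{B}^k(I)=\{\varphi\in\mathfrak{B}:I\in\mathbb{I}^{-k}(\varphi)\}$; all extended to sets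 by union. For $\mathcal{F},\mathcal{H}\subset\mathfrak{B}$, $j\in\mathbb{Z}$: $\mathcal{O}(\mathcal{F},j,\mathcal{H})=\mathbb{B}^j(\mathbb{I}(\mathcal{F}))\cap\mathcal{H}$, $\mathcal{O}(\varphi,j,\mathcal{H})=\mathcal{O}(\{\varphi\},j,\mathcal{H})$, and $\mathcal{O}^{k+1}(\mathcal{F},j,\mathcal{H})=\mathcal{O}(\mathcal{O}^k(\mathcal{F},j,\mathcal{H}),j,\mathcal{H})$. $\rho(\varphi_1,\varphi_2)=\vec i_{\varphi_1}n^{-(\ell_{\varphi_1}-\ell_{\varphi_2})}-\vec i_{\varphi_2}$, and $\|\cdot\|_\infty$ is the max of absolute values of components. *)

From HB Require Import structures.
From mathcomp Require Import all_boot all_order all_algebra.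
Set Implicit Arguments. Unset Strict Implicit. Unset Printing Implicit Defensive.
Import Order.TTheory GRing.Theory Num.Theory.
Local Open Scope ring_scope.

Definition vec (d : nat) := {ffun 'I_d -> int}.

Definition vle d (u v : vec d) : Prop := forall t, u t <= v t.
Definition vaddc d (u : vec d) (c : int) : vec d := [ffun t => u t + c].
Definition vscale d (c : int) (u : vec d) : vec d := [ffun t => c * u t].
(* D_c(i) = floor((i - c)/n), componentwise; (_ %/ _)%Z is floor division for n > 0 *)
Definition Dc (n : nat) (c : int) d (u : vec d) : vec d :=
  [ffun t => ((u t - c) %/ (n%:Z))%Z].

Definition pset (T : Type) := T -> Prop.

(* B-spline phi^l_i is represented by its (level, index) pair (l, i), l >= 0. *)
Definition bspline (d : nat) := (nat * vec d)%type.
(* A cell I^l_i is represented by its (level, index) pair. *)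
Definition cell (d : nat) := (int * vec d)%type.

Definition Bbox d (l : nat) (i j : vec d) : pset (bspline d) :=
  fun phi => phi.1 = l /\ vle i phi.2 /\ vle phi.2 j.

Definition ch (n : nat) d (I : cell d) : pset (cell d) :=
  fun J => J.1 = I.1 + 1 /\ vle (vscale n%:Z I.2) J.2
           /\ vle J.2 (vaddc (vscale n%:Z I.2) (n.-1)%:Z).

Definition chS (n : nat) d (S : pset (cell d)) : pset (cell d) :=
  fun J => exists I, S I /\ ch n I J.
Definition chn (n : nat) d (k : nat) (S : pset (cell d)) : pset (cell d) :=
  iter k (@chS n d) S.

Definition chZ (n : nat) d (k : int) (S : pset (cell d)) : pset (cell d) :=
  match k with
  | Posz k' => chn n k' S
  | Negz k' => fun J => exists I, S I /\ chn n k'.+1 (fun J' => J' = J) I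
  end.

(* cell support I(phi^l_i) = I^l[i : i + p], p = m - 1 *)
Definition Isupp (m : nat) d (phi : bspline d) : pset (cell d) :=
  fun I => I.1 = (phi.1)%:Z /\ vle phi.2 I.2 /\ vle I.2 (vaddc phi.2 (m.-1)%:Z).

Definition IsuppSet (m : nat) d (F : pset (bspline d)) : pset (cell d) :=
  fun I => exists phi, F phi /\ Isupp m phi I.

Definition IsuppK (n m : nat) d (k : int) (phi : bspline d) : pset (cell d) :=
  chZ n k (Isupp m phi).

Definition BB (n m : nat) d (k : int) (I : cell d) : pset (bspline d) :=
  fun phi => IsuppK n m (- k) phi I.
Definition BBset (n m : nat) d (k : int) (S : pset (cell d)) : pset (bspline d) :=
  fun phi => exists I, S I /\ BB n m k I phi.

Definition O (n m : nat) d (F : pset (bspline d)) (j : int) (H : pset (bspline d))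
  : pset (bspline d) :=
  fun phi => BBset n m j (IsuppSet m F) phi /\ H phi.

Definition Oiter (n m : nat) d (k : nat) (F : pset (bspline d)) (j : int)
  (H : pset (bspline d)) : pset (bspline d) :=
  iter k (fun G => O n m G j H) F.

Definition allB d : pset (bspline d) := fun _ => True.

Definition rho (n : nat) d (phi1 phi2 : bspline d) : 'I_d -> rat :=
  fun t => (phi1.2 t)%:~R * (n%:R : rat) ^ (- ((phi1.1)%:Z - (phi2.1)%:Z))
           - (phi2.2 t)%:~R.

Definition norm_inf d (v : 'I_d -> rat) : rat := \big[Num.max/0]_(t < d) `|v t|.

Definition Lmap (n m g : nat) d (u : vec d) : vec d :=
  vaddc (iter g (@Dc n 0 d) u) (- (m.-1)%:Z).
Definition Rmap (n m g : nat) d (u : vec d) : vec d :=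
  iter g (@Dc n 0 d) (vaddc u (m.-1)%:Z).

Definition Cbound (n m g k : nat) : rat :=
  (m.-1)%:R * (n%:R) ^+ g * (1 - (n%:R : rat) ^ (- (k * g)%N%:Z)) / ((n%:R) ^+ g - 1) + 1.

From HB Require Import structures.
From mathcomp Require Import all_boot all_order all_algebra.
From mathcomp Require Import zify ring lra.
Import Order.TTheory GRing.Theory Num.Theory.
Set Implicit Arguments. Unset Strict Implicit. Unset Printing Implicit Defensive.
Local Open Scope ring_scope.

(* The g-fold refinements of a cell I^{l-g}_a are the cells of level l with
   index in [n^g a : n^g a + n^g - 1], so a B-spline of level l - g and index a
   meets the support [i : j + p] of B^l[i:j] iff n^g a <= j + p and
   i < n^g (a + p + 1).  Floor division by n^g is adjoint to multiplication by
   n^g, so these conditions read L(i) <= a <= R(j); iterating gives (i).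
   Unfolding the k iterates, n^{gk} R^k(j) <= j + p (1 + n^g + ... + n^{g(k-1)})
   and symmetrically for L^k, which confines the indices of O^k(phi) to a window
   of radius C around n^{-gk} i_phi: this is (ii), and (iii) counts the integer
   points of the window. *)

Section CoarseningStep.
Variables (n m d : nat).
Hypothesis n_gt0 : (0 < n)%N.

Definition cell_box (L : int) (u v : vec d) : pset (cell d) :=
  fun J => J.1 = L /\ vle u J.2 /\ vle J.2 v.

Lemma chn_cell_box t L (u v : vec d) J :
  chn n t (cell_box L u v) J <->
  J.1 = L + t%:Z /\
  forall s, n%:Z ^+ t * u s <= J.2 s /\ J.2 s <= n%:Z ^+ t * v s + n%:Z ^+ t - 1.
Proof.
elim: t J => [|t IH] J.
  rewrite /chn /= /cell_box /vle addr0 expr0; split.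
    by case=> -> [h1 h2]; split=> // s; rewrite !mul1r addrK.
  by case=> -> h; split=> //; split=> s; have := h s; rewrite !mul1r addrK; case.
rewrite /chn iterS -/(chn n t _) /chS exprSr.
have n_gt0Z : 0 < n%:Z by rewrite ltz_nat.
have predn_Z : (n.-1)%:Z = n%:Z - 1 by lia.
set M := n%:Z ^+ t; have M_gt0 : 0 < M by rewrite exprn_gt0.
split.
  case=> I [/IH [I1 I2] [J1 [J2 J3]]]; split; first by rewrite J1 I1; lia.
  move=> s; have := I2 s; have := J2 s; have := J3 s; rewrite !ffunE /=; nia.
case=> J1 J2; exists (L + t%:Z, [ffun s => (J.2 s %/ n%:Z)%Z]); split.
  apply/IH; split=> // s; rewrite ffunE; have [h1 h2] := J2 s; split.
    by rewrite lez_divRL //; lia.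
  by rewrite -ltzD1 ltz_divLR //; nia.
split; first by rewrite J1 /=; lia.
split=> s; rewrite !ffunE /= ?predn_Z; first by rewrite mulrC lez_floor // gt_eqF.
by have := ltz_ceil (J.2 s) n_gt0Z; lia.
Qed.

Definition D0 (z : int) : int := (z %/ n%:Z)%Z.

Lemma iter_Dc0 g (u : vec d) s : iter g (@Dc n 0 d) u s = iter g D0 (u s).
Proof. by elim: g => //= g IH; rewrite ffunE subr0 IH. Qed.

Lemma le_iter_D0 g a z : (a <= iter g D0 z) = (n%:Z ^+ g * a <= z).
Proof.
elim: g a z => [|g IH] a z /=; first by rewrite expr0 mul1r.
by rewrite /D0 lez_divRL ?ltz_nat // IH exprSr mulrAC mulrA.
Qed.

Lemma iter_D0_lt g b z : (iter g D0 z < b) = (z < n%:Z ^+ g * b).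
Proof.
elim: g b z => [|g IH] b z /=; first by rewrite expr0 mul1r.
by rewrite /D0 ltz_divLR ?ltz_nat // IH exprSr mulrAC mulrA.
Qed.

Lemma Lmap_le g (i : vec d) s a :
  (Lmap n m g i s <= a) = (i s < n%:Z ^+ g * (a + (m.-1)%:Z + 1)).
Proof. by rewrite /Lmap ffunE iter_Dc0 lerBlDr -ltzD1 iter_D0_lt. Qed.

Lemma Rmap_ge g (j : vec d) s a :
  (a <= Rmap n m g j s) = (n%:Z ^+ g * a <= j s + (m.-1)%:Z).
Proof. by rewrite /Rmap iter_Dc0 ffunE le_iter_D0. Qed.

Lemma vle_Lmap_Rmap g (i j : vec d) : vle i j -> vle (Lmap n m g i) (Rmap n m g j).
Proof.
move=> le_ij s; rewrite Lmap_le.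
have M_gt0 : 0 < n%:Z ^+ g by rewrite exprn_gt0 // ltz_nat.
have : n%:Z ^+ g * Rmap n m g j s <= j s + (m.-1)%:Z by rewrite -Rmap_ge.
have : j s + (m.-1)%:Z < n%:Z ^+ g * (Rmap n m g j s + 1).
  by rewrite -iter_D0_lt /Rmap iter_Dc0 ffunE ltzD1.
have := le_ij s; nia.
Qed.

Lemma vle_iter_Lmap_Rmap g k (i j : vec d) : vle i j ->
  vle (iter k (@Lmap n m g d) i) (iter k (@Rmap n m g d) j).
Proof. by move=> le_ij; elim: k => //= k IH; apply: vle_Lmap_Rmap. Qed.

Lemma IsuppSet_Bbox l (i j : vec d) I : vle i j ->
  IsuppSet m (Bbox l i j) I <-> cell_box l%:Z i (vaddc j (m.-1)%:Z) I.
Proof.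
move=> le_ij; split.
  case=> phi [[phi1 [phi2 phi3]] [I1 [I2 I3]]]; split; first by rewrite I1 phi1.
  split=> s; first by have := phi2 s; have := I2 s; lia.
  by have := phi3 s; have := I3 s; rewrite !ffunE; lia.
case=> I1 [I2 I3]; exists (l, [ffun s => Num.max (i s) (I.2 s - (m.-1)%:Z)]).
split; split=> //; split=> s; rewrite !ffunE.
- by rewrite le_max lexx.
- by have := le_ij s; have := I3 s; rewrite ffunE ge_max => ??; apply/andP; lia.
- by have := I2 s; rewrite ge_max => ?; apply/andP; lia.
- by rewrite -lerBlDr le_max lexx orbT.
Qed.

Lemma O_Bbox g l (i j : vec d) psi : vle i j -> (g <= l)%N ->
  O n m (Bbox l i j) (- g%:Z) (@allB d) psi <->
  Bbox (l - g) (Lmap n m g i) (Rmap n m g j) psi.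
Proof.
move=> le_ij le_gl; rewrite /O /BBset /BB /IsuppK opprK /=.
have M_gt0 : 0 < n%:Z ^+ g by rewrite exprn_gt0 // ltz_nat.
set M := n%:Z ^+ g in M_gt0 *.
split.
  case=> [[I [/IsuppSet_Bbox-/(_ le_ij) [I1 [I2 I3]] /chn_cell_box [J1 J2]]] _].
  split; first by move: J1; rewrite I1 /=; lia.
  split=> s; rewrite ?Lmap_le ?Rmap_ge;
    have := I2 s; have := I3 s; have := J2 s; rewrite !ffunE -/M; lia.
case=> psi1 [psi2 psi3]; split=> //.
exists (l%:Z, [ffun s => Num.max (i s) (M * psi.2 s)]); split.
  apply/IsuppSet_Bbox => //; split=> //; split=> s; rewrite !ffunE.
    by rewrite le_max lexx.
  have := le_ij s; have := psi3 s; rewrite Rmap_ge -/M ge_max => ? ?.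
  by apply/andP; lia.
apply/chn_cell_box; split; first by rewrite psi1 /=; lia.
move=> s; have := psi2 s; have := psi3 s; rewrite Lmap_le Rmap_ge !ffunE -/M => ? ?.
by split; [rewrite le_max lexx orbT | rewrite ge_max; apply/andP; split; nia].
Qed.

End CoarseningStep.

Lemma eq_O n m d (F F' : pset (bspline d)) j H :
  (forall x, F x <-> F' x) -> forall psi, O n m F j H psi <-> O n m F' j H psi.
Proof.
move=> eqF psi; split; case=> [[I [[phi [Fphi suppI]] BBI]] Hpsi]; split=> //;
  by exists I; split=> //; exists phi; split=> //; apply/eqF.
Qed.

Lemma eq_Oiter n m d k (F F' : pset (bspline d)) j H :
  (forall x, F x <-> F' x) -> forall psi, Oiter n m k F j H psi <-> Oiter n m k F' j H psi.
Proof. by move=> eqF; elim: k => [|k IH] psi //=; apply: eq_O. Qed.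

Lemma Oiter_Bbox n m d (g l : nat) (i j : vec d) k psi :
  (0 < n)%N -> vle i j -> (g * k <= l)%N ->
  Oiter n m k (Bbox l i j) (- g%:Z) (@allB d) psi <->
  Bbox (l - g * k) (iter k (@Lmap n m g d) i) (iter k (@Rmap n m g d) j) psi.
Proof.
move=> n_gt0 le_ij; elim: k psi => [|k IH] psi le_gkl; first by rewrite /= muln0 subn0.
rewrite mulnS in le_gkl; have le_gk : (g * k <= l)%N by lia.
rewrite /Oiter iterS -/(Oiter n m k _ _ _) (@eq_O n m d _ _ _ _ (IH^~ le_gk)).
rewrite O_Bbox //; last by rewrite leq_subRL // addnC.
  by rewrite mulnS subnDA subnAC.
exact: vle_iter_Lmap_Rmap.
Qed.

Lemma Bbox_single d (phi x : bspline d) : x = phi <-> Bbox phi.1 phi.2 phi.2 x.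
Proof.
case: phi x => l a [l' b]; rewrite /Bbox /=; split; first by case=> -> ->; do 2!split=> //.
case=> -> [le_ab le_ba]; congr pair; apply/ffunP=> s; apply/le_anti.
by rewrite le_ab le_ba.
Qed.

Lemma Oiter_single n m d (g : nat) (phi : bspline d) k psi :
  (0 < n)%N -> (g * k <= phi.1)%N ->
  Oiter n m k (fun x => x = phi) (- g%:Z) (@allB d) psi <->
  Bbox (phi.1 - g * k) (iter k (@Lmap n m g d) phi.2) (iter k (@Rmap n m g d) phi.2) psi.
Proof.
by move=> n_gt0 le_gk; rewrite (@eq_Oiter n m d k _ _ _ _ (@Bbox_single d phi)) Oiter_Bbox.
Qed.

Section IterateBounds.
Variables (n m d : nat).
Hypothesis n_gt0 : (0 < n)%N.

Lemma iter_Rmap_le g k (u : vec d) s :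
  (n%:Z ^+ g) ^+ k * iter k (@Rmap n m g d) u s
    <= u s + (m.-1)%:Z * \sum_(t < k) (n%:Z ^+ g) ^+ t.
Proof.
have M_gt0 : 0 < n%:Z ^+ g by rewrite exprn_gt0 // ltz_nat.
set M := n%:Z ^+ g in M_gt0 *.
elim: k => [|k IH]; first by rewrite big_ord0 expr0 mul1r mulr0 addr0.
have P_ge0 : 0 <= M ^+ k by rewrite exprn_ge0 // ltW.
have step : M * Rmap n m g (iter k (@Rmap n m g d) u) s
    <= iter k (@Rmap n m g d) u s + (m.-1)%:Z by rewrite -Rmap_ge.
rewrite big_ord_recr exprSr /=.
move: IH P_ge0 step; set P := M ^+ k; set S := \sum_(t < k) _.
set y := iter k _ u s; set y' := Rmap _ _ _ _ s; nia.
Qed.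

Lemma iter_Lmap_ge g k (u : vec d) s :
  u s - (n%:Z ^+ g) ^+ k * iter k (@Lmap n m g d) u s
    <= (m.-1)%:Z * n%:Z ^+ g * \sum_(t < k) (n%:Z ^+ g) ^+ t + (n%:Z ^+ g) ^+ k - 1.
Proof.
have M_gt0 : 0 < n%:Z ^+ g by rewrite exprn_gt0 // ltz_nat.
set M := n%:Z ^+ g in M_gt0 *.
elim: k => [|k IH]; first by rewrite big_ord0 expr0 mul1r mulr0 add0r !subrr.
have P_ge0 : 0 <= M ^+ k by rewrite exprn_ge0 // ltW.
have step : iter k (@Lmap n m g d) u s
    < M * (Lmap n m g (iter k (@Lmap n m g d) u) s + (m.-1)%:Z + 1) by rewrite -Lmap_le.
rewrite big_ord_recr exprSr /=.
move: IH P_ge0 step; set P := M ^+ k; set S := \sum_(t < k) _.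
set y := iter k _ u s; set y' := Lmap _ _ _ _ s; nia.
Qed.

End IterateBounds.

Lemma Cbound_geometric n m g k : (1 < n)%N -> (0 < g)%N ->
  Cbound n m g k = (m.-1)%:R * n%:R ^+ g * (\sum_(t < k) (n%:R ^+ g) ^+ t)
                   * n%:R ^ (- (k * g)%N%:Z) + 1 :> rat.
Proof.
move=> n_gt1 g_gt0; rewrite /Cbound -exprnN mulnC exprM.
have M_gt1 : 1 < (n%:R : rat) ^+ g by rewrite exprn_egt1 ?ltr1n // -lt0n.
set M := (n%:R : rat) ^+ g in M_gt1 *.
have M1_neq0 : M - 1 != 0 by rewrite subr_eq0 gt_eqF.
have P_neq0 : M ^+ k != 0 by rewrite expf_neq0 // gt_eqF // (lt_trans ltr01).
have -> : 1 - (M ^+ k)^-1 = (M - 1) * (\sum_(t < k) M ^+ t) / M ^+ k.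
  by rewrite -subrX1; field.
by congr (_ + _); field; rewrite P_neq0.
Qed.

Lemma iter_Lmap_Rmap_window n m d g k (u : vec d) s : (1 < n)%N -> (0 < g)%N ->
  (u s)%:~R * n%:R ^ (- (k * g)%N%:Z) - Cbound n m g k <= (iter k (@Lmap n m g d) u s)%:~R
  /\ (iter k (@Rmap n m g d) u s)%:~R <= (u s)%:~R * n%:R ^ (- (k * g)%N%:Z) + Cbound n m g k.
Proof.
move=> n_gt1 g_gt0; have n_gt0 : (0 < n)%N by apply: ltnW.
have castS : (\sum_(t < k) (n%:Z ^+ g) ^+ t)%:~R = \sum_(t < k) (n%:R ^+ g) ^+ t :> rat.
  by rewrite rmorph_sum; apply: eq_bigr => t _; rewrite !rmorphXn.
have R_le := iter_Rmap_le m n_gt0 g k u s; rewrite -(ler_int rat) in R_le.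
have L_ge := iter_Lmap_ge m n_gt0 g k u s; rewrite -(ler_int rat) in L_ge.
rewrite !(intrD, intrB, intrN, intrM, rmorphXn) castS /= in R_le L_ge.
rewrite Cbound_geometric // -exprnN mulnC exprM.
set M := (n%:R : rat) ^+ g in R_le L_ge *; set S := \sum_(t < k) _ in R_le L_ge *.
set a := (u s)%:~R in R_le L_ge *; set p : rat := (m.-1)%:R.
have pE : (m.-1)%:~R = p by []; rewrite pE in R_le L_ge.
set X := (iter k _ u s)%:~R in L_ge *; set Y := (iter k _ u s)%:~R in R_le *.
have M_ge1 : 1 <= M by rewrite exprn_ege1 // ler1n ltnW.
have P_gt0 : 0 < M ^+ k by rewrite exprn_gt0 // (lt_le_trans ltr01).
have S_ge0 : 0 <= S by apply: sumr_ge0 => t _; rewrite exprn_ge0 // (le_trans ler01).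
set q := (M ^+ k)^-1; have q_gt0 : 0 < q by rewrite invr_gt0.
have qP : q * M ^+ k = 1 by rewrite mulVf // gt_eqF.
have pSq_ge0 : 0 <= p * S * q by rewrite !mulr_ge0 // ltW.
have pSq_le : p * S * q <= p * M * S * q by nra.
have Y_le : Y <= q * (a + p * S).
  have -> : Y = q * (M ^+ k * Y) by rewrite mulrA qP mul1r.
  by apply: ler_wpM2l; [exact: ltW | lra].
have X_ge : q * (a - p * M * S - M ^+ k + 1) <= X.
  have -> : X = q * (M ^+ k * X) by rewrite mulrA qP mul1r.
  by apply: ler_wpM2l; [exact: ltW | lra].
split; lra.
Qed.

Lemma Cbound_ge1 n m g k : (1 < n)%N -> (0 < g)%N -> 1 <= Cbound n m g k.
Proof.
move=> n_gt1 g_gt0; rewrite Cbound_geometric // lerDr.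
have M_ge0 : 0 <= (n%:R : rat) ^+ g by rewrite exprn_ge0.
rewrite !mulr_ge0 // ?sumr_ge0 // => [t _|]; first exact: exprn_ge0.
by rewrite exprz_ge0.
Qed.

Lemma Cbound_le n m g k : (1 < n)%N ->
  Cbound n m g k <= (m.-1)%:R * n%:R ^+ g / (n%:R ^+ g - 1) + 1.
Proof.
move=> n_gt1; rewrite /Cbound lerD2r mulrAC ler_piMr //.
  apply: divr_ge0; first by rewrite mulr_ge0 // exprn_ge0.
  by rewrite subr_ge0 exprn_ege1 // ler1n ltnW.
by rewrite gerBl exprz_ge0.
Qed.

Lemma norm_inf_le d (v : 'I_d -> rat) c : 0 <= c -> (forall t, `|v t| <= c) -> norm_inf v <= c.
Proof. by move=> c_ge0 le_vc; apply: bigmax_le. Qed.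

Lemma norm_inf_rho_le n m d g k (phi psi : bspline d) :
  (1 < n)%N -> (0 < g)%N -> (g * k <= phi.1)%N ->
  Bbox (phi.1 - g * k) (iter k (@Lmap n m g d) phi.2) (iter k (@Rmap n m g d) phi.2) psi ->
  norm_inf (rho n phi psi) <= Cbound n m g k.
Proof.
move=> n_gt1 g_gt0 le_gk [psi1 [psi2 psi3]].
apply: norm_inf_le => [|t]; first exact: le_trans ler01 (Cbound_ge1 _ _ _ _).
have [X_ge Y_le] := @iter_Lmap_Rmap_window n m d g k phi.2 t n_gt1 g_gt0.
rewrite /rho psi1 (_ : - _ = - (k * g)%N%:Z); last by lia.
have := psi2 t; have := psi3 t; rewrite -!(ler_int rat) ler_norml; lra.
Qed.

Lemma size_Bbox_le d l (X Y : vec d) (w : nat) (s : seq (bspline d)) :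
  uniq s -> (forall t, Y t - X t <= w%:Z) -> (forall psi, psi \in s -> Bbox l X Y psi) ->
  (size s <= w.+1 ^ d)%N.
Proof.
move=> s_uniq le_YX s_box.
pose f (psi : bspline d) := [ffun t => inord `|psi.2 t - X t|%N : 'I_w.+1].
suff f_inj : {in s &, injective f}.
  rewrite -(size_map f) -(card_uniqP _) ?map_inj_in_uniq //.
  by apply: leq_trans (max_card _) _; rewrite card_ffun !card_ord.
have offsetE t (z : int) : X t <= z -> (`|z - X t|%N)%:Z = z - X t.
  by rewrite -subr_ge0 => /gez0_abs.
have offset_lt t (z : int) : X t <= z <= Y t -> (`|z - X t| < w.+1)%N.
  by case/andP=> ge_zX le_zY; rewrite -ltz_nat offsetE //; have := le_YX t; lia.
move=> [lx x] [ly y] /s_box [/= -> [x_ge x_le]] /s_box [/= -> [y_ge y_le]] /ffunP fxy.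
congr pair; apply/ffunP => t; have := fxy t; rewrite !ffunE /= => /(congr1 (@nat_of_ord _)).
rewrite !inordK ?offset_lt ?x_ge ?x_le ?y_ge ?y_le // => /(congr1 Posz).
by rewrite !offsetE // => /addIr.
Qed.

Lemma size_Bbox_iter_le n m d g k (phi : bspline d) (s : seq (bspline d)) :
  (1 < n)%N -> (0 < g)%N -> uniq s ->
  (forall psi, psi \in s ->
     Bbox (phi.1 - g * k) (iter k (@Lmap n m g d) phi.2) (iter k (@Rmap n m g d) phi.2) psi) ->
  (size s)%:R <= (2 * Cbound n m g k + 1) ^+ d.
Proof.
move=> n_gt1 g_gt0 s_uniq s_box.
set X := iter k (@Lmap n m g d) phi.2; set Y := iter k (@Rmap n m g d) phi.2.
set C := Cbound n m g k.
have le_XY : vle X Y by apply: vle_iter_Lmap_Rmap; [apply: ltnW | move=> t].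
have width t : (`|Y t - X t|%N)%:R <= 2 * C :> rat.
  have [X_ge Y_le] := @iter_Lmap_Rmap_window n m d g k phi.2 t n_gt1 g_gt0.
  rewrite -/X -/Y -/C in X_ge Y_le.
  by rewrite natr_absz ger0_norm ?subr_ge0 ?le_XY // intrB; lra.
pose w := (\max_(t < d) `|Y t - X t|%N)%N.
have le_YX t : Y t - X t <= w%:Z.
  by rewrite -[Y t - X t]gez0_abs ?subr_ge0 ?le_XY // lez_nat (leq_bigmax t).
apply: le_trans (_ : (w.+1 ^ d)%:R <= _).
  by rewrite ler_nat; apply: size_Bbox_le le_YX s_box.
have C_ge0 : 0 <= C by rewrite (le_trans ler01) ?Cbound_ge1.
rewrite natrX -natr1 lerXn2r ?nnegrE ?lerD2r ?addr_ge0 ?mulr_ge0 //.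
by apply: (big_ind (fun w : nat => w%:R <= 2 * C)) => // [|x y]; [rewrite mulr_ge0 | case: leqP].
Qed.

Theorem lemma3p16 (d n m : nat) (hd : (1 <= d)%N) (hn : (2 <= n)%N) (hm : (2 <= m)%N)
  (g l : nat) (hg : (0 < g)%N) (i j : vec d) (hij : vle i j)
  (k : nat) (hk1 : (1 <= k)%N) (hk2 : (k <= l %/ g)%N) :
  (* (i) *)
  (forall psi : bspline d,
     Oiter n m k (Bbox l i j) (- g%:Z) (@allB d) psi <->
     Bbox (l - g * k)%N (iter k (@Lmap n m g d) i) (iter k (@Rmap n m g d) j) psi) /\
  (* (ii) *)
  (forall phi : bspline d, phi.1 = l ->
     (forall psi : bspline d,
        Oiter n m k (fun x => x = phi) (- g%:Z) (@allB d) psi ->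
        psi.1 = (l - g * k)%N /\ norm_inf (rho n phi psi) <= Cbound n m g k)) /\
  Cbound n m g k <= (m.-1)%:R * (n%:R) ^+ g / ((n%:R) ^+ g - 1) + 1 /\
  (* (iii) *)
  (forall phi : bspline d, phi.1 = l ->
     forall s : seq (bspline d), uniq s ->
       (forall psi, psi \in s -> Oiter n m k (fun x => x = phi) (- g%:Z) (@allB d) psi) ->
       (size s)%:R <= (2 * Cbound n m g k + 1) ^+ d).
Proof.
have n_gt0 : (0 < n)%N by apply: ltnW.
have le_gkl : (g * k <= l)%N by rewrite mulnC -leq_divRL.
split; first by move=> psi; apply: Oiter_Bbox.
split.
  move=> phi phi1 psi /Oiter_single; rewrite phi1 => /(_ n_gt0 le_gkl) psi_box.
  split; first by case: psi_box.
  by apply: norm_inf_rho_le; rewrite ?phi1.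
split; first exact: Cbound_le.
move=> phi phi1 s s_uniq s_O; apply: (size_Bbox_iter_le (phi := phi)) => // psi /s_O.
by move/Oiter_single; apply; rewrite ?phi1.
Qed.
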